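(* Let $u$ be a solution of the Degasperis–Procesi equation in the class $C^0([0,T);H^4(\mathbb{R}))\cap C^1([0,T);H^3(\mathbb{R}))$ and let $\omega_1,\omega_2,\omega_3$ be the one-forms below built from $u$. Consider the system, for unknown functions $\Gamma(x,t)$ and $\gamma(x,t)$, $$-2\,d\Gamma=\omega_3+\omega_2-2\Gamma\omega_1+\Gamma^2(\omega_3-\omega_2),\qquad 2\,d\gamma=\omega_3-\omega_2-2\gamma\omega_1+\gamma^2(\omega_3+\omega_2).$$ Then this system is completely integrable, and for its solutions the one-forms $$\theta=\omega_1-\Gamma(\omega_3-\omega_2),\qquad \hat\theta=-\omega_1+\gamma(\omega_3+\omega_2)$$ are closed on the solutions of the Degasperis–Procesi equation.
   Context: Degasperis–Procesi equation: $u_t-u_{txx}+4uu_x=3u_xu_{xx}+uu_{xxx}$. With $m=u-u_{xx}$, $F=u_x^2-2uu_x+uu_{xx}$, real $\mu$ and a fixed sign choice (upper signs together or lower together): $\omega_1=m\,dx+F\,dt$, $\omega_2=(\mu m\pm2\sqrt{1+\mu^2})dx+\mu F\,dt$, $\omega_3=(\pm\sqrt{1+\mu^2}\,m+2\mu)dx\pm\sqrt{1+\mu^2}\,F\,dt$. On solutions these satisfy $d\omega_1=\omega_3\wedge\omega_2$, $d\omega_2=\omega_1\wedge\omega_3$, $d\omega_3=\omega_1\wedge\omega_2$. *)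

From Stdlib Require Import Reals.
From Coquelicot Require Import Coquelicot.
Open Scope R_scope.

Definition px (f : R -> R -> R) (x t : R) : R := Derive (fun y => f y t) x.
Definition pt (f : R -> R -> R) (x t : R) : R := Derive (fun s => f x s) t.

Record form := mkForm { fdx : R -> R -> R ; fdt : R -> R -> R }.

Definition m_of (u : R -> R -> R) (x t : R) : R := u x t - px (px u) x t.
Definition F_of (u : R -> R -> R) (x t : R) : R :=
  (px u x t) ^ 2 - 2 * u x t * px u x t + u x t * px (px u) x t.

(** The one-forms omega_1, omega_2, omega_3; the sign choice (upper / lower
    signs together) is encoded by eps in {1,-1}. *)
Definition omega1 (u : R -> R -> R) : form := mkForm (m_of u) (F_of u).
Definition omega2 (u : R -> R -> R) (mu eps : R) : form :=
  mkForm (fun x t => mu * m_of u x t + 2 * eps * sqrt (1 + mu ^ 2))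
         (fun x t => mu * F_of u x t).
Definition omega3 (u : R -> R -> R) (mu eps : R) : form :=
  mkForm (fun x t => eps * sqrt (1 + mu ^ 2) * m_of u x t + 2 * mu)
         (fun x t => eps * sqrt (1 + mu ^ 2) * F_of u x t).

Definition region (T x t : R) : Prop := 0 < t < T.

(** u is a (classical) solution of the Degasperis–Procesi equation
    u_t - u_txx + 4 u u_x = 3 u_x u_xx + u u_xxx on R x (0,T), with exactly the
    classical derivatives guaranteed by u in C^0([0,T);H^4) ∩ C^1([0,T);H^3):
    u, u_x, u_xx, u_xxx, u_t and u_txx = (u_xx)_t. *)
Definition DP_solution (T : R) (u : R -> R -> R) : Prop :=
  forall x t, region T x t ->
    ex_derive (fun y => u y t) x /\
    ex_derive (fun y => px u y t) x /\
    ex_derive (fun y => px (px u) y t) x /\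
    ex_derive (fun s => u x s) t /\
    ex_derive (fun s => px (px u) x s) t /\
    pt u x t - pt (px (px u)) x t + 4 * u x t * px u x t
      = 3 * px u x t * px (px u) x t + u x t * px (px (px u)) x t.

(** Complete integrability (Frobenius condition) of the first-order system
    Y_x = f(x,t,Y), Y_t = g(x,t,Y) on a region D: the compatibility condition
    f_t + f_Y g = g_x + g_Y f holds identically in (x,t,Y). *)
Definition completely_integrable (D : R -> R -> Prop)
    (f g : R -> R -> R -> R) : Prop :=
  forall x t y, D x t ->
    ex_derive (fun s => f x s y) t /\ ex_derive (fun z => f x t z) y /\
    ex_derive (fun s => g s t y) x /\ ex_derive (fun z => g x t z) y /\
    Derive (fun s => f x s y) t + Derive (fun z => f x t z) y * g x t y
      = Derive (fun s => g s t y) x + Derive (fun z => g x t z) y * f x t y.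

Definition solves_system (D : R -> R -> Prop) (f g : R -> R -> R -> R)
    (Y : R -> R -> R) : Prop :=
  forall x t, D x t ->
    ex_derive (fun y => Y y t) x /\ ex_derive (fun s => Y x s) t /\
    px Y x t = f x t (Y x t) /\ pt Y x t = g x t (Y x t).

Definition closed_form (D : R -> R -> Prop) (w : form) : Prop :=
  forall x t, D x t ->
    ex_derive (fun s => fdx w x s) t /\ ex_derive (fun y => fdt w y t) x /\
    Derive (fun s => fdx w x s) t = Derive (fun y => fdt w y t) x.

(** -2 dΓ = ω3 + ω2 - 2Γ ω1 + Γ^2 (ω3 - ω2), componentwise (sel = fdx or fdt). *)
Definition Gamma_rhs (sel : form -> R -> R -> R) (w1 w2 w3 : form)
    (x t G : R) : R :=
  - (1/2) * (sel w3 x t + sel w2 x t - 2 * G * sel w1 x t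
             + G ^ 2 * (sel w3 x t - sel w2 x t)).

(** 2 dγ = ω3 - ω2 - 2γ ω1 + γ^2 (ω3 + ω2), componentwise. *)
Definition gamma_rhs (sel : form -> R -> R -> R) (w1 w2 w3 : form)
    (x t g : R) : R :=
  (1/2) * (sel w3 x t - sel w2 x t - 2 * g * sel w1 x t
           + g ^ 2 * (sel w3 x t + sel w2 x t)).

Definition theta (w1 w2 w3 : form) (G : R -> R -> R) : form :=
  mkForm (fun x t => fdx w1 x t - G x t * (fdx w3 x t - fdx w2 x t))
         (fun x t => fdt w1 x t - G x t * (fdt w3 x t - fdt w2 x t)).
Definition theta_hat (w1 w2 w3 : form) (g : R -> R -> R) : form :=
  mkForm (fun x t => - fdx w1 x t + g x t * (fdx w3 x t + fdx w2 x t))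
         (fun x t => - fdt w1 x t + g x t * (fdt w3 x t + fdt w2 x t)).

(** On solutions of the Degasperis–Procesi equation the forms ω1, ω2, ω3
    satisfy the structure equations of a pseudospherical surface,
    dω1 = ω3∧ω2, dω2 = ω1∧ω3, dω3 = ω1∧ω2: all three reduce to the
    conservation law F_x − m_t = −2F, which is the equation itself, together
    with ε²(1+μ²) − μ² = 1.  Both systems are Riccati equations
    dY = a + bY + cY², and the structure equations give their coefficient
    forms the relations da = b∧a, db = 2c∧a, dc = c∧b, which are exactly the
    vanishing of d(a + bY + cY²) identically in Y once dY is substituted.
    Finally θ and θ̂ are b + 2Yc = ∂_Y(a + bY + cY²): along a solution this
    form is d(log δY) for the variations δY of the solution, hence closed. *)

From Stdlib Require Import Reals Lra FunctionalExtensionality.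
From Coquelicot Require Import Coquelicot.
Open Scope R_scope.

(* The derivative lemmas below keep their functions eta-expanded, so that
   rewriting with them produces the same [Derive (fun s => ..)] terms as
   [auto_derive] and [dform]; [ring] compares such atoms syntactically. *)
Lemma Derive_plus_eta (f g : R -> R) (z : R) :
  ex_derive f z -> ex_derive g z ->
  Derive (fun s => f s + g s) z = Derive (fun s => f s) z + Derive (fun s => g s) z.
Proof. intros; apply is_derive_unique; auto_derive; [tauto | ring]. Qed.

Lemma Derive_scal_eta (k : R) (f : R -> R) (z : R) :
  Derive (fun s => k * f s) z = k * Derive (fun s => f s) z.
Proof. apply Derive_scal. Qed.

Lemma Derive_mult_eta (f g : R -> R) (z : R) :
  ex_derive f z -> ex_derive g z ->
  Derive (fun s => f s * g s) z
  = Derive (fun s => f s) z * g z + f z * Derive (fun s => g s) z.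
Proof. intros; apply is_derive_unique; auto_derive; [tauto | ring]. Qed.

Lemma Derive_quadratic_coeffs (f g h : R -> R) (y z : R) :
  ex_derive f z -> ex_derive g z -> ex_derive h z ->
  Derive (fun s => f s + g s * y + h s * y ^ 2) z
  = Derive (fun s => f s) z + Derive (fun s => g s) z * y
    + Derive (fun s => h s) z * y ^ 2.
Proof. intros; apply is_derive_unique; auto_derive; [tauto | ring]. Qed.

Lemma Derive_quadratic (A B C y : R) :
  Derive (fun z => A + B * z + C * z ^ 2) y = B + 2 * C * y.
Proof. apply is_derive_unique; auto_derive; [tauto | ring]. Qed.

Definition fadd (v w : form) : form :=
  mkForm (fun x t => fdx v x t + fdx w x t) (fun x t => fdt v x t + fdt w x t).

Definition fscale (k : R) (w : form) : form :=
  mkForm (fun x t => k * fdx w x t) (fun x t => k * fdt w x t).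

Definition differentiable_form (D : R -> R -> Prop) (w : form) : Prop :=
  forall x t, D x t ->
    ex_derive (fun s => fdx w x s) t /\ ex_derive (fun y => fdt w y t) x.

Definition dform (w : form) (x t : R) : R :=
  Derive (fun y => fdt w y t) x - Derive (fun s => fdx w x s) t.

Definition wedge (v w : form) (x t : R) : R :=
  fdx v x t * fdt w x t - fdt v x t * fdx w x t.

Lemma form_ext (v w : form) :
  (forall x t, fdx v x t = fdx w x t) -> (forall x t, fdt v x t = fdt w x t) -> v = w.
Proof.
  destruct v as [P Q], w as [P' Q']; simpl; intros HP HQ.
  f_equal; extensionality x; extensionality t; auto.
Qed.

Lemma closed_form_intro (D : R -> R -> Prop) (w : form) :
  differentiable_form D w -> (forall x t, D x t -> dform w x t = 0) ->
  closed_form D w.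
Proof.
  intros Hw Hd x t Hxt; destruct (Hw x t Hxt) as [Ht Hx].
  specialize (Hd x t Hxt); unfold dform in Hd.
  repeat split; auto; lra.
Qed.

Lemma Derive_dt_of_dform (w : form) (x t k : R) :
  dform w x t = k ->
  Derive (fun y => fdt w y t) x = Derive (fun s => fdx w x s) t + k.
Proof. unfold dform; lra. Qed.

Section FormCalculus.

Variable D : R -> R -> Prop.

Lemma differentiable_fadd (v w : form) :
  differentiable_form D v -> differentiable_form D w ->
  differentiable_form D (fadd v w).
Proof.
  intros Hv Hw x t Hxt; destruct (Hv x t Hxt), (Hw x t Hxt); simpl.
  split; auto_derive; tauto.
Qed.

Lemma differentiable_fscale (k : R) (w : form) :
  differentiable_form D w -> differentiable_form D (fscale k w).
Proof.
  intros Hw x t Hxt; destruct (Hw x t Hxt); simpl.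
  split; auto_derive; tauto.
Qed.

Lemma dform_fadd (v w : form) (x t : R) :
  differentiable_form D v -> differentiable_form D w -> D x t ->
  dform (fadd v w) x t = dform v x t + dform w x t.
Proof.
  intros Hv Hw Hxt; destruct (Hv x t Hxt), (Hw x t Hxt).
  unfold dform; simpl; rewrite !Derive_plus_eta by assumption; ring.
Qed.

Lemma dform_fscale (k : R) (w : form) (x t : R) :
  dform (fscale k w) x t = k * dform w x t.
Proof. unfold dform; simpl; rewrite !Derive_scal_eta; ring. Qed.

Lemma differentiable_affine (P Q : R -> R -> R) (c k : R) :
  differentiable_form D (mkForm P Q) ->
  differentiable_form D (mkForm (fun x t => c * P x t + k) (fun x t => c * Q x t)).
Proof.
  intros HPQ x t Hxt; destruct (HPQ x t Hxt); simpl in *.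
  split; auto_derive; tauto.
Qed.

Lemma dform_affine (P Q : R -> R -> R) (c k x t : R) :
  differentiable_form D (mkForm P Q) -> D x t ->
  dform (mkForm (fun x t => c * P x t + k) (fun x t => c * Q x t)) x t
  = c * dform (mkForm P Q) x t.
Proof.
  intros HPQ Hxt; destruct (HPQ x t Hxt); unfold dform; simpl in *.
  rewrite Derive_plus_eta, Derive_const, !Derive_scal_eta
    by (auto_derive; tauto).
  ring.
Qed.

End FormCalculus.

Definition riccati (sel : form -> R -> R -> R) (a b c : form) (x t y : R) : R :=
  sel a x t + sel b x t * y + sel c x t * y ^ 2.

Record riccati_compatible (D : R -> R -> Prop) (a b c : form) : Prop := {
  riccati_diff_a : differentiable_form D a;
  riccati_diff_b : differentiable_form D b;
  riccati_diff_c : differentiable_form D c;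
  riccati_da : forall x t, D x t -> dform a x t = wedge b a x t;
  riccati_db : forall x t, D x t -> dform b x t = 2 * wedge c a x t;
  riccati_dc : forall x t, D x t -> dform c x t = wedge c b x t }.

Definition riccati_linearized (b c : form) (Y : R -> R -> R) : form :=
  mkForm (fun x t => fdx b x t + 2 * Y x t * fdx c x t)
         (fun x t => fdt b x t + 2 * Y x t * fdt c x t).

Section Riccati.

Variables (D : R -> R -> Prop) (a b c : form).
Hypothesis abc : riccati_compatible D a b c.

Lemma riccati_completely_integrable :
  completely_integrable D (riccati fdx a b c) (riccati fdt a b c).
Proof.
  destruct abc as [Ha Hb Hc da db dc].
  intros x t y Hxt.
  destruct (Ha x t Hxt), (Hb x t Hxt), (Hc x t Hxt).
  unfold riccati; repeat split; try (auto_derive; tauto).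
  rewrite !Derive_quadratic_coeffs, !Derive_quadratic by assumption.
  rewrite (Derive_dt_of_dform _ _ _ _ (da x t Hxt)),
          (Derive_dt_of_dform _ _ _ _ (db x t Hxt)),
          (Derive_dt_of_dform _ _ _ _ (dc x t Hxt)).
  unfold wedge; ring.
Qed.

Lemma riccati_linearized_closed (Y : R -> R -> R) :
  solves_system D (riccati fdx a b c) (riccati fdt a b c) Y ->
  closed_form D (riccati_linearized b c Y).
Proof.
  destruct abc as [_ Hb Hc _ db dc].
  intros HY; apply closed_form_intro.
  - intros x t Hxt.
    destruct (HY x t Hxt) as (? & ? & _), (Hb x t Hxt), (Hc x t Hxt).
    simpl; split; auto_derive; tauto.
  - intros x t Hxt.
    destruct (HY x t Hxt) as (? & ? & HYx & HYt), (Hb x t Hxt), (Hc x t Hxt).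
    unfold px, pt in HYx, HYt.
    unfold dform; simpl.
    rewrite !Derive_plus_eta, !Derive_mult_eta, !Derive_const
      by (auto_derive; tauto).
    rewrite HYx, HYt, (Derive_dt_of_dform _ _ _ _ (db x t Hxt)),
            (Derive_dt_of_dform _ _ _ _ (dc x t Hxt)).
    unfold riccati, wedge; ring.
Qed.

End Riccati.

Record pseudospherical (D : R -> R -> Prop) (w1 w2 w3 : form) : Prop := {
  pseudospherical_diff1 : differentiable_form D w1;
  pseudospherical_diff2 : differentiable_form D w2;
  pseudospherical_diff3 : differentiable_form D w3;
  pseudospherical_d1 : forall x t, D x t -> dform w1 x t = wedge w3 w2 x t;
  pseudospherical_d2 : forall x t, D x t -> dform w2 x t = wedge w1 w3 x t;
  pseudospherical_d3 : forall x t, D x t -> dform w3 x t = wedge w1 w2 x t }.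

Local Hint Resolve differentiable_fadd differentiable_fscale : core.

Section Pseudospherical.

Variables (D : R -> R -> Prop) (w1 w2 w3 : form).
Hypothesis Hw : pseudospherical D w1 w2 w3.

Lemma pseudospherical_Gamma_system :
  completely_integrable D (Gamma_rhs fdx w1 w2 w3) (Gamma_rhs fdt w1 w2 w3) /\
  (forall Gam : R -> R -> R,
     solves_system D (Gamma_rhs fdx w1 w2 w3) (Gamma_rhs fdt w1 w2 w3) Gam ->
     closed_form D (theta w1 w2 w3 Gam)).
Proof.
  destruct Hw as [H1 H2 H3 d1 d2 d3].
  set (a := fscale (-1/2) (fadd w3 w2)).
  set (c := fscale (-1/2) (fadd w3 (fscale (-1) w2))).
  assert (Habc : riccati_compatible D a w1 c).
  { subst a c; constructor; auto; intros x t Hxt;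
      rewrite ?dform_fscale, ?(dform_fadd D), ?dform_fscale, ?d1, ?d2, ?d3 by auto;
      unfold wedge; simpl; field. }
  assert (Hrhs : forall sel, (sel = fdx \/ sel = fdt) ->
                   Gamma_rhs sel w1 w2 w3 = riccati sel a w1 c).
  { intros sel Hsel; extensionality x; extensionality t; extensionality y.
    destruct Hsel; subst; unfold Gamma_rhs, riccati; simpl; field. }
  rewrite !Hrhs by auto.
  split.
  - exact (riccati_completely_integrable _ _ _ _ Habc).
  - intros Gam HGam.
    replace (theta w1 w2 w3 Gam) with (riccati_linearized w1 c Gam)
      by (apply form_ext; intros; simpl; field).
    exact (riccati_linearized_closed _ _ _ _ Habc _ HGam).
Qed.

Lemma pseudospherical_gamma_system :
  completely_integrable D (gamma_rhs fdx w1 w2 w3) (gamma_rhs fdt w1 w2 w3) /\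
  (forall gam : R -> R -> R,
     solves_system D (gamma_rhs fdx w1 w2 w3) (gamma_rhs fdt w1 w2 w3) gam ->
     closed_form D (theta_hat w1 w2 w3 gam)).
Proof.
  destruct Hw as [H1 H2 H3 d1 d2 d3].
  set (a := fscale (1/2) (fadd w3 (fscale (-1) w2))).
  set (b := fscale (-1) w1).
  set (c := fscale (1/2) (fadd w3 w2)).
  assert (Habc : riccati_compatible D a b c).
  { subst a b c; constructor; auto; intros x t Hxt;
      rewrite ?dform_fscale, ?(dform_fadd D), ?dform_fscale, ?d1, ?d2, ?d3 by auto;
      unfold wedge; simpl; field. }
  assert (Hrhs : forall sel, (sel = fdx \/ sel = fdt) ->
                   gamma_rhs sel w1 w2 w3 = riccati sel a b c).
  { intros sel Hsel; extensionality x; extensionality t; extensionality y.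
    destruct Hsel; subst; unfold gamma_rhs, riccati; simpl; field. }
  rewrite !Hrhs by auto.
  split.
  - exact (riccati_completely_integrable _ _ _ _ Habc).
  - intros gam Hgam.
    replace (theta_hat w1 w2 w3 gam) with (riccati_linearized b c gam)
      by (apply form_ext; intros; simpl; field).
    exact (riccati_linearized_closed _ _ _ _ Habc _ Hgam).
Qed.

End Pseudospherical.

Section DegasperisProcesi.

Variables (T : R) (u : R -> R -> R).
Hypothesis Hu : DP_solution T u.

Lemma DP_differentiable_omega1 : differentiable_form (region T) (omega1 u).
Proof.
  intros x t Hxt; destruct (Hu x t Hxt) as (? & ? & ? & ? & ? & _).
  simpl; unfold m_of, F_of; split; auto_derive; tauto.
Qed.

Lemma DP_dform_omega1 (x t : R) :
  region T x t -> dform (omega1 u) x t = -2 * F_of u x t.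
Proof.
  intros Hxt; destruct (Hu x t Hxt) as (? & ? & ? & ? & ? & Hdp).
  unfold dform; simpl; unfold m_of, F_of.
  assert (Hmt : Derive (fun s => u x s - px (px u) x s) t
                = pt u x t - pt (px (px u)) x t).
  { apply is_derive_unique; auto_derive; [tauto | unfold pt; ring]. }
  assert (HFx : Derive (fun y => px u y t ^ 2 - 2 * u y t * px u y t
                                 + u y t * px (px u) y t) x
                = 3 * px u x t * px (px u) x t - 2 * px u x t ^ 2
                  - 2 * u x t * px (px u) x t + u x t * px (px (px u)) x t).
  { apply is_derive_unique; auto_derive; [tauto | unfold px; ring]. }
  rewrite Hmt, HFx; lra.
Qed.

Lemma DP_pseudospherical (mu eps : R) :
  eps ^ 2 = 1 ->
  pseudospherical (region T) (omega1 u) (omega2 u mu eps) (omega3 u mu eps).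
Proof.
  intros Heps.
  assert (Hs : (eps * sqrt (1 + mu ^ 2)) ^ 2 = 1 + mu ^ 2).
  { rewrite Rpow_mult_distr, Heps, pow2_sqrt; [ring | nra]. }
  pose proof DP_differentiable_omega1 as H1.
  constructor; try exact (differentiable_affine _ _ _ _ _ H1); try exact H1;
    intros x t Hxt.
  - rewrite DP_dform_omega1 by assumption.
    cbv [wedge omega1 omega2 omega3 fdx fdt].
    transitivity (2 * F_of u x t * (mu ^ 2 - (eps * sqrt (1 + mu ^ 2)) ^ 2));
      [rewrite Hs | ]; ring.
  - assert (H2 : dform (omega2 u mu eps) x t = mu * dform (omega1 u) x t)
      by exact (dform_affine _ _ _ _ _ _ _ H1 Hxt).
    rewrite H2, DP_dform_omega1 by assumption.
    cbv [wedge omega1 omega2 omega3 fdx fdt]; ring.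
  - assert (H3 : dform (omega3 u mu eps) x t
                 = eps * sqrt (1 + mu ^ 2) * dform (omega1 u) x t)
      by exact (dform_affine _ _ _ _ _ _ _ H1 Hxt).
    rewrite H3, DP_dform_omega1 by assumption.
    cbv [wedge omega1 omega2 omega3 fdx fdt]; ring.
Qed.

End DegasperisProcesi.

Theorem proposition8p1 (T mu eps : R) (u : R -> R -> R) :
  (eps = 1 \/ eps = -1) ->
  DP_solution T u ->
  let w1 := omega1 u in
  let w2 := omega2 u mu eps in
  let w3 := omega3 u mu eps in
  completely_integrable (region T)
    (Gamma_rhs fdx w1 w2 w3) (Gamma_rhs fdt w1 w2 w3) /\
  completely_integrable (region T)
    (gamma_rhs fdx w1 w2 w3) (gamma_rhs fdt w1 w2 w3) /\
  (forall Gam : R -> R -> R,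
     solves_system (region T) (Gamma_rhs fdx w1 w2 w3) (Gamma_rhs fdt w1 w2 w3) Gam ->
     closed_form (region T) (theta w1 w2 w3 Gam)) /\
  (forall gam : R -> R -> R,
     solves_system (region T) (gamma_rhs fdx w1 w2 w3) (gamma_rhs fdt w1 w2 w3) gam ->
     closed_form (region T) (theta_hat w1 w2 w3 gam)).
Proof.
  intros Heps Hdp w1 w2 w3.
  assert (Hw : pseudospherical (region T) w1 w2 w3).
  { apply DP_pseudospherical; [exact Hdp | destruct Heps; subst; ring]. }
  destruct (pseudospherical_Gamma_system _ _ _ _ Hw) as [HGam Htheta].
  destruct (pseudospherical_gamma_system _ _ _ _ Hw) as [Hgam Htheta_hat].
  auto.
Qed.
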